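(* Let $K$ be a finitely generated field of characteristic $0$, let $\lambda$ be the number of roots of unity contained in $K$, let $\overline{K}$ be an algebraic closure of $K$, and let $$\Gamma:=\{x\in\overline{K}^\times : x^n\in K^\times \text{ for some integer } n>0\}.$$ Let $\alpha_1,\dots,\alpha_s\in\Gamma$ be such that $\alpha_1+\cdots+\alpha_s=1$ and no proper subsum of $\alpha_1+\cdots+\alpha_s$ vanishes. Then there exist roots of unity $\xi_1,\dots,\xi_s\in\overline{K}^\times$ such that $\alpha_i^\lambda\xi_i\in K$ for each $i=1,\dots,s$.
   Context: A proper subsum means $\sum_{i\in I}\alpha_i$ for a nonempty subset $I\subsetneq\{1,\dots,s\}$. *)

From HB Require Import structures.
From mathcomp Require Import all_boot all_order all_algebra.
Set Implicit Arguments. Unset Strict Implicit. Unset Printing Implicit Defensive.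
Import Order.TTheory GRing.Theory Num.Theory.
Local Open Scope ring_scope.

Definition is_root_of_unity (F : nzRingType) (x : F) : Prop :=
  exists n : nat, (0 < n)%N /\ x ^+ n = 1.

(* K is finitely generated as a field (over its prime field): there is a finite
   list of elements such that every subfield of K containing them is all of K. *)
Definition fin_gen_field (K : fieldType) : Prop :=
  exists s : seq K, forall S : pred K,
    (1 \in S) ->
    (forall x y, x \in S -> y \in S -> x - y \in S) ->
    (forall x y, x \in S -> y \in S -> x * y \in S) ->
    (forall x, x \in S -> x^-1 \in S) ->
    {subset s <= S} -> forall x, x \in S.

Definition is_alg_closure (K : fieldType) (Kbar : closedFieldType)
  (iota : {rmorphism K -> Kbar}) : Prop :=
  forall x : Kbar, exists p : {poly K}, p != 0 /\ root (map_poly iota p) x.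

Definition num_roots_of_unity (K : fieldType) (lam : nat) : Prop :=
  exists s : seq K, uniq s /\ size s = lam /\
    forall x, x \in s <-> is_root_of_unity x.

Definition in_Gamma (K : fieldType) (Kbar : closedFieldType)
  (iota : {rmorphism K -> Kbar}) (x : Kbar) : Prop :=
  x != 0 /\ exists n : nat, (0 < n)%N /\ exists y : K, y != 0 /\ x ^+ n = iota y.

From Stdlib Require Import Classical.
From HB Require Import structures.
From mathcomp Require Import all_boot all_order all_algebra all_fingroup all_solvable all_field.
Set Implicit Arguments.
Unset Strict Implicit.
Unset Printing Implicit Defensive.
Import Order.TTheory GRing.Theory Num.Theory.
Local Open Scope ring_scope.

(* Choose [N] with every [alpha i ^+ N] in [K] and a primitive [N]-th root of unity [z],
   and work in a Galois extension [L] of [K] containing [z] and the [alpha i].  Every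
   conjugate of [alpha i] over [K(z)] is [alpha i] times a power of [z], so the trace of
   [L / K(z)] kills the [alpha i] outside [K(z)]; applied to [\sum_i alpha i = 1] it shows
   that those inside [K(z)] already sum to [1], and nondegeneracy puts all of them in [K(z)].
   For [a] in [K(z)] with [a ^+ N] in [K], the exponents [e] such that [a ^+ e * z ^+ m]
   lies in [K] for some [m] are the multiples of some [g].  As [Gal(K(z) / K)] is abelian,
   [z ^+ (N %/ g)] is Galois-invariant, hence a primitive [g]-th root of unity of [K], so
   [g] divides [lam]. *)

Definition nondegenerate_sum {V : nmodType} {s : nat} (a : 'I_s -> V) : Prop :=
  forall I : {set 'I_s}, I != set0 -> I != setT -> \sum_(i in I) a i != 0.

Lemma nondegenerate_sum_fmorph (F : fieldType) (R : nzRingType)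
    (f : {rmorphism F -> R}) s (a : 'I_s -> F) (alpha : 'I_s -> R) :
  (forall i, f (a i) = alpha i) -> nondegenerate_sum alpha -> nondegenerate_sum a.
Proof.
move=> fa nd I I0 IT; apply: contra (nd I I0 IT) => /eqP sum0.
by rewrite -(eq_bigr _ (fun i _ => fa i)) -rmorph_sum sum0 rmorph0.
Qed.

Lemma nondegenerate_subsum1 (R : nzRingType) s (a : 'I_s -> R) (I : {set 'I_s}) :
  nondegenerate_sum a -> \sum_i a i = 1 -> \sum_(i in I) a i = 1 -> I = setT.
Proof.
move=> nd sum1 sumI1.
have sumC0 : \sum_(i in ~: I) a i = 0.
  move/eqP: sum1; rewrite (bigID (mem I)) /= sumI1 addrC -subr_eq0 addrK => /eqP C0.
  by rewrite -[RHS]C0; apply: eq_bigl => i; rewrite in_setC.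
have [C0 | C_neq0] := eqVneq (~: I) set0; first by rewrite -[I]setCK C0 setC0.
have [CT | C_neqT] := eqVneq (~: I) setT.
  by move: sumI1; rewrite -[I]setCK CT setCT big_set0 => /eqP; rewrite eq_sym oner_eq0.
by move: (nd _ C_neq0 C_neqT); rewrite sumC0 eqxx.
Qed.

Lemma unity_root_neq0 (R : nzRingType) (x : R) n : (0 < n)%N -> x ^+ n = 1 -> x != 0.
Proof.
move=> n_gt0 xn1; apply: contra_eq_neq xn1 => ->.
by rewrite expr0n gtn_eqF // eq_sym oner_neq0.
Qed.

Lemma pchar0_mulrnI (R : idomainType) n :
  [pchar R] =i pred0 -> (0 < n)%N -> injective (fun x : R => x *+ n).
Proof.
move=> pchar0 n_gt0 x y /eqP; rewrite -subr_eq0 -mulrnBl -mulr_natr mulf_eq0.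
by rewrite ((pcharf0P _).1 pchar0) gtn_eqF // orbF subr_eq0 => /eqP.
Qed.

(* Multiplication by [c] permutes the [lam] roots of unity of [K], so [c ^+ lam = 1]. *)
Lemma prim_order_dvd_num_roots_of_unity (K : fieldType) lam g (c : K) :
  num_roots_of_unity K lam -> g.-primitive_root c -> (g %| lam)%N.
Proof.
case=> r [r_uniq [r_size r_roots]] c_prim.
have g_gt0 := prim_order_gt0 c_prim; have cg1 := prim_expr_order c_prim.
have r_neq0 x : x \in r -> x != 0.
  by move=> /r_roots [n [n_gt0 xn1]]; apply: unity_root_neq0 n_gt0 xn1.
have cr_sub : {subset map ( *%R c) r <= r}.
  move=> _ /mapP [x /r_roots [n [n_gt0 xn1]] ->]; apply/r_roots; exists (g * n)%N.
  by rewrite muln_gt0 g_gt0 exprMn exprM cg1 expr1n mulnC exprM xn1 expr1n mul1r.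
have cr_uniq : uniq (map ( *%R c) r).
  by rewrite map_inj_uniq //; apply: mulfI; apply: unity_root_neq0 g_gt0 cg1.
have cr_perm : perm_eq (map ( *%R c) r) r.
  by apply: uniq_perm => //; apply: (uniq_min_size cr_uniq cr_sub _).2; rewrite size_map.
have r_prod_neq0 : \prod_(x <- r) x != 0.
  by rewrite prodf_seq_neq0; apply/allP => x /r_neq0.
have := perm_big _ cr_perm (F := id) (op := *%R) (x := 1) (P := xpredT).
rewrite big_map big_split /= [\prod_(_ <- r) c](big_nth 0) prodr_const_nat subn0 r_size.
rewrite -{2}[\prod_(x <- r) x]mul1r.
by move=> /(mulIf r_prod_neq0) /eqP; rewrite -(prim_order_dvd c_prim).
Qed.

Lemma closed_pchar0_prim_root (C : closedFieldType) n :
  [pchar C] =i pred0 -> (0 < n)%N -> exists z : C, n.-primitive_root z.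
Proof.
move=> pchar0 n_gt0; have [r Dp] := closed_field_poly_normal ('X^n - 1 : {poly C}).
rewrite (monicP _) ?monicXnsubC // scale1r in Dp.
have r_roots : all n.-unity_root r by apply/allP => z; rewrite -root_prod_XsubC -Dp.
have r_size : (n < (size r).+1)%N by rewrite -(size_prod_XsubC r id) -Dp size_XnsubC.
have [|z _] := hasP (has_prim_root n_gt0 r_roots _ r_size); last by exists z.
rewrite -separable_prod_XsubC -Dp separable_Xn_sub_1 //.
by rewrite ((pcharf0P _).1 pchar0) -lt0n.
Qed.

Lemma Gamma_common_exponent (K : fieldType) (C : closedFieldType)
    (iota : {rmorphism K -> C}) s (alpha : 'I_s -> C) :
  (forall i, in_Gamma iota (alpha i)) ->
  exists2 N, (0 < N)%N & forall i, exists b : K, alpha i ^+ N = iota b.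
Proof.
move=> Gamma_alpha.
have n_ex i : exists n, (0 < n)%N /\ exists b, alpha i ^+ n = iota b.
  have [_ [n [n_gt0 [b [_ alpha_b]]]]] := Gamma_alpha i.
  by exists n; split; last exists b.
have [n n_spec] := fin_all_exists n_ex.
exists (\prod_i n i)%N; first by rewrite prodn_gt0 // => i; case: (n_spec i).
move=> i; have [_ [b alpha_b]] := n_spec i.
exists (b ^+ (\prod_(j | j != i) n j)).
by rewrite (bigD1 i) //= exprM alpha_b rmorphXn.
Qed.

Section SplittingFieldInClosure.
Variables (K : fieldType) (C : closedFieldType) (iota : {rmorphism K -> C}).
Hypothesis pchar0 : [pchar K] =i pred0.
Hypothesis alg_closure : is_alg_closure iota.

Lemma pchar0_PET_seq (r : seq C) :
  exists z, (exists k : nat ^ size r, z = \sum_(i < size r) r`_i *+ k i)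
     /\ exists ps, r = [seq (map_poly iota p).[z] | p <- ps].
Proof.
elim: r => [|x r [z [[k Dz] [ps Dr]]]].
  by exists 0; split; [exists [ffun _ => 0%N]; rewrite big_ord0 | exists nil].
suff [[n [|px [|pz []]]] // [Dpx Dpz]] :
    exists np, [:: x; z] = [seq (map_poly iota p).[x *+ np.1 + z] | p <- np.2].
  exists (x *+ n + z); split.
    exists [ffun i => oapp k n (unlift ord0 i)].
    rewrite big_ord_recl ffunE unlift_none Dz; congr (_ + _).
    by apply: eq_bigr => i _; rewrite ffunE liftK.
  exists (px :: [seq p \Po pz | p <- ps]); rewrite /= -Dpx; congr (_ :: _).
  rewrite -map_comp Dr; apply: eq_map => p /=.
  by rewrite map_comp_poly horner_comp -Dpz.
have [qx [qx_neq0 qx_x]] := alg_closure x; have [qz [qz_neq0 qz_z]] := alg_closure (- z).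
have [n [[pz Dpz] [px Dpx]]] := pchar0_PET qz_neq0 qz_z qx_neq0 qx_x pchar0.
by exists (n, [:: px; - pz]); rewrite /= !raddfN hornerN -[z]opprK Dpz Dpx.
Qed.

Lemma irreducible_root_exists (x : C) :
  exists r : {poly K}, root (map_poly iota r) x /\ irreducible_poly r.
Proof.
have [p [p_neq0 p_x]] := alg_closure x.
elim: {p}_.+1 {-2}p (ltnSn (size p)) p_neq0 p_x => // n IHn p p_size p_neq0 p_x.
have [[q [q_x q_neq0 q_lt]] | no_smaller] := classic (exists q : {poly K},
    [/\ root (map_poly iota q) x, q != 0 & (size q < size p)%N]).
  by apply: IHn q_neq0 q_x; rewrite (leq_trans q_lt).
exists p; split => //; apply/(subfx_irreducibleP p_x p_neq0) => q q_x q_neq0.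
by rewrite leqNgt; apply/negP => q_lt; apply: no_smaller; exists q.
Qed.

Lemma alg_seq_annihilator (xs : seq C) :
  exists2 P : {poly K}, P != 0 & forall x, x \in xs -> root (map_poly iota P) x.
Proof.
elim: xs => [|x xs [P P_neq0 P_xs]]; first by exists 1; rewrite ?oner_eq0.
have [p [p_neq0 p_x]] := alg_closure x; exists (P * p); first by rewrite mulf_neq0.
by move=> y; rewrite inE rmorphM rootM => /predU1P [-> | /P_xs ->]; rewrite ?p_x ?orbT.
Qed.

Section AdjoinRoot.
Variables (z : C) (r : {poly K}).
Hypotheses (r_z : root (map_poly iota r) z) (r_irr : irreducible_poly r).

Let L0 : fieldExtType K := SubFieldExtType r_z r_irr.
Let f0 : {rmorphism L0 -> C} := subfx_inj.
Let inL0 (p : {poly K}) : L0 := (map_poly (in_alg L0) p).[subfx_root iota z r].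
Let r_neq0 : r != 0 := irredp_neq0 r_irr.

Let f0A b : f0 b%:A = iota b. Proof. exact: (subfx_inj_base r_z r_neq0 b). Qed.

Let f0_root : f0 (subfx_root iota z r) = z.
Proof. exact: (subfx_inj_root r_z r_neq0). Qed.

Let f0_inL0 p : f0 (inL0 p) = (map_poly iota p).[z].
Proof.
rewrite /inL0 -horner_map /= f0_root -map_poly_comp.
by congr (_.[_]); apply: eq_map_poly => b /=; rewrite f0A.
Qed.

(* [z] generates [L0] over [K], so it suffices that [z] is a sum of the roots of [P]. *)
Lemma subfx_splitting_field_axiom (P : {poly K}) (ps : seq {poly K}) (ys : seq C)
    (k : nat ^ size ys) :
  ys = [seq (map_poly iota p).[z] | p <- ps] ->
  map_poly iota P %= \prod_(y <- ys) ('X - y%:P) ->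
  z = \sum_(i < size ys) ys`_i *+ k i ->
  splitting_field_axiom L0.
Proof.
move=> Dys P_split Dz; exists (map_poly (in_alg L0) P); first exact: alg_polyOver.
have f0_ys : map f0 (map inL0 ps) = ys.
  by rewrite Dys -map_comp; apply: eq_map; exact: f0_inL0.
exists (map inL0 ps).
  rewrite -(eqp_map f0) -map_poly_comp (eq_map_poly (g := iota)); last first.
    by move=> b /=; rewrite f0A.
  rewrite rmorph_prod (eq_bigr (fun y => 'X - (f0 y)%:P)); last first.
    by move=> y _; rewrite rmorphB /= map_polyX map_polyC.
  by rewrite -(big_map f0 xpredT (fun y => 'X - y%:P)) f0_ys.
have size_ys : size (map inL0 ps) = size ys by rewrite -f0_ys !size_map.
have root_sum : subfx_root iota z r = \sum_(i < size ys) (map inL0 ps)`_i *+ k i.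
  apply: (fmorph_inj f0); rewrite f0_root Dz rmorph_sum.
  by apply: eq_bigr => i _; rewrite rmorphMn -(nth_map 0 0) ?f0_ys ?size_ys.
apply/vspaceP => x; rewrite memvf; have [p ->] := subfxEroot r_z r_neq0 x.
elim/poly_ind: p => [|p b IHp]; first by rewrite rmorph0 horner0 mem0v.
rewrite rmorphD rmorphM /= map_polyX map_polyC hornerMXaddC.
apply: memvD; last by apply/memvZ/(subvP (subv_adjoin_seq _ _))/mem1v.
apply: memvM => //; rewrite root_sum; apply: rpred_sum => i _; apply: rpredMn.
by apply/seqv_sub_adjoin/mem_nth; rewrite size_ys.
Qed.

End AdjoinRoot.

Lemma splitting_field_in_closure (xs : seq C) :
  exists (L : splittingFieldType K) (f : {rmorphism L -> C}),
    (forall b, f b%:A = iota b) /\ forall x, x \in xs -> exists y, f y = x.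
Proof.
have [P P_neq0 P_xs] := alg_seq_annihilator xs.
have [ys DP] := closed_field_poly_normal (map_poly iota P).
have P_split : map_poly iota P %= \prod_(y <- ys) ('X - y%:P).
  by rewrite DP eqp_scale // lead_coef_eq0 map_poly_eq0.
have [z [[k Dz] [ps Dys]]] := pchar0_PET_seq ys.
have [r [r_z r_irr]] := irreducible_root_exists z.
pose L0 := SubFieldExtType r_z r_irr.
pose L : splittingFieldType K := HB.pack L0
  (FieldExt_isSplittingField.Build _ L0 (subfx_splitting_field_axiom r_z r_irr Dys P_split Dz)).
exists L, subfx_inj; split; first exact: subfx_inj_base r_z (irredp_neq0 r_irr).
move=> x /P_xs; rewrite (eqp_root P_split) root_prod_XsubC Dys.
case/mapP=> p _ ->; exists (subfx_eval iota z r p).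
exact: subfx_inj_eval r_z (irredp_neq0 r_irr) p.
Qed.

End SplittingFieldInClosure.

Section Kummer.
Variables (K : fieldType) (L : splittingFieldType K).
Hypothesis pchar0 : [pchar K] =i pred0.

Let pchar0_L : [pchar L] =i pred0.
Proof. by move=> p; rewrite pchar_lalg pchar0. Qed.

Lemma pchar0_galois_full : galois 1 {:L}.
Proof.
apply/and3P; split; [exact: sub1v | | exact: normalFieldf].
by apply/separableP => y _; apply: pcharf0_separable.
Qed.

Variables (N : nat) (z : L).
Hypothesis z_prim : N.-primitive_root z.

Let N_gt0 : (0 < N)%N. Proof. exact: prim_order_gt0 z_prim. Qed.
Let z_neq0 : z != 0. Proof. exact: unity_root_neq0 N_gt0 (prim_expr_order z_prim). Qed.
Let z_Kz : z \in <<1; z>>%VS. Proof. exact: memv_adjoin. Qed.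

Lemma gal_kummer (E : {subfield L}) (x : gal_of {:L}) (a : L) :
  x \in 'Gal({:L} / E)%g -> a != 0 -> a ^+ N \in E -> exists k : nat, x a = z ^+ k * a.
Proof.
move=> x_gal a_neq0 aN.
have : (x a / a) ^+ N = 1.
  by rewrite expr_div_n -rmorphXn /= (fixed_gal (subvf _) x_gal aN) divff ?expf_neq0.
by case/(prim_rootP z_prim) => k xa; exists k; rewrite -xa divfK.
Qed.

Lemma galois_adjoin_prim_root : galois <<1; z>> {:L}.
Proof. by apply: galoisS pchar0_galois_full; rewrite sub1v subvf. Qed.

Lemma galTrace_adjoin_prim_root (a : L) :
  a \in <<1; z>>%VS -> galTrace <<1; z>> {:L} a = a *+ #|'Gal({:L} / <<1; z>>)%g|.
Proof.
move=> a_Kz; rewrite /galTrace -sumr_const; apply: eq_bigr => x x_gal.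
exact: fixed_gal (subvf _) x_gal a_Kz.
Qed.

(* Some [t] in the Galois group moves [a] to [z ^+ m * a] with [z ^+ m != 1];
   the trace is [t]-invariant and [<<1; z>>]-linear, hence killed by [z ^+ m - 1]. *)
Lemma galTrace_kummer_notin (a : L) :
  a != 0 -> a ^+ N \in <<1; z>>%VS -> a \notin <<1; z>>%VS ->
  galTrace <<1; z>> {:L} a = 0.
Proof.
move=> a_neq0 aN a_notin.
have [t t_gal ta_neq] : exists2 t, t \in 'Gal({:L} / <<1; z>>)%g & t a != a.
  apply/exists_inP; apply: contraR a_notin; rewrite negb_exists_in => /forall_inP fix_a.
  rewrite -(galois_fixedField galois_adjoin_prim_root); apply/fixedFieldP => [|x /fix_a].
    exact: memvf.
  by move/negbNE/eqP.
have [m ta] := gal_kummer t_gal a_neq0 aN.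
have zm_neq1 : z ^+ m != 1 by apply: contra_neq ta_neq => zm1; rewrite ta zm1 mul1r.
have : galTrace <<1; z>> {:L} a = z ^+ m * galTrace <<1; z>> {:L} a.
  rewrite -{1}(galTrace_gal (memvf a) t_gal) ta /galTrace mulr_sumr.
  apply: eq_bigr => x x_gal; rewrite rmorphM rmorphXn /=.
  by rewrite (fixed_gal (subvf _) x_gal z_Kz).
move/eqP; rewrite -subr_eq0 -{1}[galTrace _ _ a]mul1r -mulrBl mulf_eq0 subr_eq0.
by rewrite eq_sym (negPf zm_neq1) => /eqP.
Qed.

(* Apply the trace to [\sum_i a i = 1]: only the terms lying in [<<1; z>>] survive. *)
Lemma nondegenerate_sum_mem_adjoin_prim_root s (a : 'I_s -> L) :
  (forall i, a i != 0) -> (forall i, a i ^+ N \in <<1; z>>%VS) ->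
  \sum_i a i = 1 -> nondegenerate_sum a -> forall i, a i \in <<1; z>>%VS.
Proof.
move=> a_neq0 aN sum1 nd i.
pose I := [set i | a i \in <<1; z>>%VS].
have gal_gt0 : (0 < #|'Gal({:L} / <<1; z>>)%g|)%N.
  by apply/card_gt0P; exists 1%g; apply: group1.
have sumI1 : \sum_(i in I) a i = 1.
  apply: (pchar0_mulrnI pchar0_L gal_gt0) => /=.
  rewrite -sumrMnl -(galTrace_adjoin_prim_root (mem1v _)) -[X in galTrace _ _ X]sum1.
  rewrite raddf_sum [RHS](bigID (mem I)) /= [X in _ = _ + X]big1 ?addr0 => [|j]; last first.
    by rewrite inE; apply: galTrace_kummer_notin.
  by apply: eq_bigr => j; rewrite inE => /galTrace_adjoin_prim_root ->.
by have := nondegenerate_subsum1 nd sum1 sumI1 => /setP /(_ i); rewrite !inE.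
Qed.

Lemma gal_prim_root (x : gal_of {:L}) :
  x \in 'Gal({:L} / 1%AS)%g -> exists2 t, (0 < t)%N & x z = z ^+ t.
Proof.
move=> x_gal; have zN : z ^+ N \in 1%VS by rewrite prim_expr_order ?mem1v.
by have [k ->] := gal_kummer x_gal z_neq0 zN; exists k.+1; rewrite ?exprSr.
Qed.

Lemma gal_adjoin_prim_root_comm (x y : gal_of {:L}) (w : L) :
  x \in 'Gal({:L} / 1%AS)%g -> y \in 'Gal({:L} / 1%AS)%g -> w \in <<1; z>>%VS ->
  x (y w) = y (x w).
Proof.
move=> x_gal y_gal /Fadjoin1_polyP [p ->].
have gal_horner u v : u \in 'Gal({:L} / 1%AS)%g ->
    u (map_poly (in_alg L) p).[v] = (map_poly (in_alg L) p).[u v].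
  move=> u_gal; rewrite -horner_map /=; congr (_.[_]).
  exact: fixedPoly_gal (sub1v _) u_gal (alg_polyOver _ p).
have [tx _ xz] := gal_prim_root x_gal; have [ty _ yz] := gal_prim_root y_gal.
by rewrite !gal_horner // xz yz !rmorphXn /= xz yz -!exprM mulnC.
Qed.

Section Twist.
Variable a : L.
Hypotheses (a_neq0 : a != 0) (aN : a ^+ N \in 1%VS) (a_Kz : a \in <<1; z>>%VS).

Definition twistable (e : nat) : bool := [exists m : 'I_N, a ^+ e * z ^+ m \in 1%VS].

Lemma twistableP e : reflect (exists m : nat, a ^+ e * z ^+ m \in 1%VS) (twistable e).
Proof.
apply: (iffP existsP) => [[m am] | [m am]]; first by exists m.
by exists (Ordinal (ltn_pmod m N_gt0)); rewrite /= (prim_expr_mod z_prim).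
Qed.

Lemma twistableN : twistable N.
Proof. by apply/twistableP; exists 0%N; rewrite mulr1. Qed.

Lemma twistableD e1 e2 : twistable e1 -> twistable e2 -> twistable (e1 + e2).
Proof.
move=> /twistableP [m1 am1] /twistableP [m2 am2]; apply/twistableP; exists (m1 + m2)%N.
by rewrite !exprD mulrACA memvM.
Qed.

Lemma twistableMn k e : twistable e -> twistable (k * e).
Proof.
move=> te; elim: k => [|k IHk]; last by rewrite mulSn twistableD.
by apply/twistableP; exists 0%N; rewrite mul0n !expr0 mulr1 mem1v.
Qed.

(* [z ^+ (N.-1 * m)] is the inverse of [z ^+ m]. *)
Lemma twistableB e1 e2 : (e2 <= e1)%N -> twistable e1 -> twistable e2 -> twistable (e1 - e2).
Proof.
move=> le_e21 /twistableP [m1 am1] /twistableP [m2 am2].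
apply/twistableP; exists (m1 + N.-1 * m2)%N.
have am2_neq0 : a ^+ e2 * z ^+ m2 != 0 by rewrite mulf_neq0 ?expf_neq0.
suff -> : a ^+ (e1 - e2) * z ^+ (m1 + N.-1 * m2) = a ^+ e1 * z ^+ m1 / (a ^+ e2 * z ^+ m2).
  by rewrite memvM ?memvV.
apply: (mulIf am2_neq0); rewrite divfK // mulrACA -!exprD subnK //; congr (_ * _).
rewrite -addnA -{2}[m2]mul1n -mulnDl addn1 prednK // exprD exprM.
by rewrite (prim_expr_order z_prim) expr1n mulr1.
Qed.

Lemma twistable_gcd e1 e2 : twistable e1 -> twistable e2 -> twistable (gcdn e1 e2).
Proof.
move=> te1 te2; have [-> | e1_gt0] := posnP e1; first by rewrite gcd0n.
have [k1 k2 De1 _] := egcdnP e2 e1_gt0.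
rewrite -(addKn (k2 * e2) (gcdn e1 e2)) -De1.
by apply: twistableB; [rewrite De1 leq_addr | apply: twistableMn ..].
Qed.

Lemma twistable_generator :
  exists g, [/\ (0 < g)%N, twistable g & forall e, twistable e -> (g %| e)%N].
Proof.
have twistable_pos : exists e, (0 < e)%N && twistable e.
  by exists N; rewrite N_gt0 twistableN.
have [g /andP [g_gt0 tg] g_min] := ex_minnP twistable_pos.
exists g; split => // e te; have tgcd := twistable_gcd tg te.
have gcd_gt0 : (0 < gcdn g e)%N by rewrite gcdn_gt0 g_gt0.
apply/gcdn_idPl/eqP; rewrite eqn_leq dvdn_leq ?dvdn_gcdl //=.
by apply: g_min; rewrite gcd_gt0 tgcd.
Qed.

(* The Galois group acts on [<<1; z>>] through the abelian group of powers of [z], so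
   [a ^+ t / x a] is fixed by every automorphism [y]. *)
Lemma twistable_gal_exponent (x : gal_of {:L}) t :
  x \in 'Gal({:L} / 1%AS)%g -> (0 < t)%N -> x z = z ^+ t -> twistable t.-1.
Proof.
move=> x_gal t_gt0 xz; have [k xa] := gal_kummer x_gal a_neq0 aN.
have xa_neq0 : x a != 0 by rewrite fmorph_eq0.
have ratio1 : a ^+ t / x a \in 1%VS.
  rewrite -(galois_fixedField pchar0_galois_full); apply/fixedFieldP => [|y y_gal].
    exact: memvf.
  rewrite fmorph_div rmorphXn /= (gal_adjoin_prim_root_comm y_gal x_gal a_Kz).
  have [j ->] := gal_kummer y_gal a_neq0 aN.
  rewrite rmorphM rmorphXn /= xz exprMn -!exprM mulnC invfM mulrACA divff ?mul1r //.
  by rewrite expf_neq0.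
apply/twistableP; exists (N.-1 * k)%N.
suff -> : a ^+ t.-1 * z ^+ (N.-1 * k) = a ^+ t / x a by [].
apply: (mulIf xa_neq0).
rewrite divfK // xa [z ^+ k * a]mulrC mulrACA -exprSr prednK // -exprD.
rewrite -{2}[k]mul1n -mulnDl addn1 prednK // exprM (prim_expr_order z_prim).
by rewrite expr1n mulr1.
Qed.

Lemma twistable_generator_root g :
  (0 < g)%N -> twistable g -> (forall e, twistable e -> (g %| e)%N) ->
  z ^+ (N %/ g) \in 1%VS.
Proof.
move=> g_gt0 tg g_dvd; have g_dvdN := g_dvd _ twistableN.
rewrite -(galois_fixedField pchar0_galois_full); apply/fixedFieldP => [|x x_gal].
  exact: memvf.
have [t t_gt0 xz] := gal_prim_root x_gal.
have /dvdnP [q Dt] := g_dvd _ (twistable_gal_exponent x_gal t_gt0 xz).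
rewrite rmorphXn /= xz -exprM -(prednK t_gt0) mulSn exprD Dt.
rewrite -mulnA [(g * _)%N]mulnC divnK // mulnC exprM (prim_expr_order z_prim).
by rewrite expr1n mulr1.
Qed.

Lemma twistable_num_roots_of_unity lam : num_roots_of_unity K lam -> twistable lam.
Proof.
move=> rouK; have [g [g_gt0 tg g_dvd]] := twistable_generator.
have g_dvdN := g_dvd _ twistableN.
have [c Dc] := vlineP _ _ (twistable_generator_root g_gt0 tg g_dvd).
have c_prim : g.-primitive_root c.
  have := exp_prim_root z_prim (N %/ g).
  rewrite Dc -in_algE fmorph_primitive_root (gcdn_idPl (dvdn_div g_dvdN)) //.
  by rewrite -{1}(divnK g_dvdN) mulKn // divn_gt0 // dvdn_leq.
by rewrite -(divnK (prim_order_dvd_num_roots_of_unity rouK c_prim)) twistableMn.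
Qed.

End Twist.

Lemma nondegenerate_sum_twist lam s (a : 'I_s -> L) :
  num_roots_of_unity K lam -> (forall i, a i != 0) -> (forall i, a i ^+ N \in 1%VS) ->
  \sum_i a i = 1 -> nondegenerate_sum a ->
  forall i, exists m (y : K), a i ^+ lam * z ^+ m = y%:A.
Proof.
move=> rouK a_neq0 aN sum1 nd i.
have aN_Kz j : a j ^+ N \in <<1; z>>%VS by apply: subvP (aN j); apply: sub1v.
have a_Kz := nondegenerate_sum_mem_adjoin_prim_root a_neq0 aN_Kz sum1 nd i.
have /twistableP [m /vlineP [y Dy]] := twistable_num_roots_of_unity (a_neq0 i) (aN i) a_Kz rouK.
by exists m, y.
Qed.

End Kummer.

Lemma nondegenerate_sum_twist_closure (K : fieldType) (C : closedFieldType)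
    (iota : {rmorphism K -> C}) lam N s (alpha : 'I_s -> C) (zeta : C) :
  [pchar K] =i pred0 -> is_alg_closure iota -> num_roots_of_unity K lam ->
  N.-primitive_root zeta -> (forall i, alpha i != 0) ->
  (forall i, exists b : K, alpha i ^+ N = iota b) ->
  \sum_i alpha i = 1 -> nondegenerate_sum alpha ->
  forall i, exists m (y : K), alpha i ^+ lam * zeta ^+ m = iota y.
Proof.
move=> pchar0 algK rouK zeta_prim alpha_neq0 alphaN sum1 nondeg i.
have [L [f [fA f_onto]]] :=
  splitting_field_in_closure pchar0 algK (zeta :: map alpha (enum 'I_s)).
have [z fz] := f_onto zeta (mem_head _ _).
have alpha_im j : exists y, f y = alpha j.
  by apply: f_onto; rewrite inE map_f ?mem_enum ?orbT.
have [a fa] := fin_all_exists alpha_im.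
have z_prim : N.-primitive_root z by rewrite -(fmorph_primitive_root f) fz.
have a_neq0 j : a j != 0 by rewrite -(fmorph_eq0 f) fa.
have aN j : a j ^+ N \in 1%VS.
  have [b alpha_b] := alphaN j; suff -> : a j ^+ N = b%:A by rewrite rpredZ ?mem1v.
  by apply: (fmorph_inj f); rewrite rmorphXn /= fa alpha_b fA.
have a_sum : \sum_j a j = 1.
  by apply: (fmorph_inj f); rewrite rmorph_sum rmorph1 -sum1; apply: eq_bigr.
have a_nondeg := nondegenerate_sum_fmorph fa nondeg.
have [m [y Dy]] := nondegenerate_sum_twist pchar0 z_prim rouK a_neq0 aN a_sum a_nondeg i.
by exists m, y; rewrite -fa -fz -!rmorphXn -rmorphM Dy fA.
Qed.

Theorem corollary1p4 (K : fieldType) (Kbar : closedFieldType)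
  (iota : {rmorphism K -> Kbar}) (lam : nat) (s : nat) (alpha : 'I_s -> Kbar) :
  [pchar K] =i pred0 ->
  fin_gen_field K ->
  is_alg_closure iota ->
  num_roots_of_unity K lam ->
  (forall i, in_Gamma iota (alpha i)) ->
  \sum_(i < s) alpha i = 1 ->
  (forall I : {set 'I_s}, I != set0 -> I != setT -> \sum_(i in I) alpha i != 0) ->
  exists xi : 'I_s -> Kbar,
    forall i, xi i != 0 /\ is_root_of_unity (xi i) /\
      exists y : K, alpha i ^+ lam * xi i = iota y.
Proof.
(* Finite generation of [K] is only needed for the finiteness of its roots of unity. *)
move=> pchar0 _ algK rouK Gamma_alpha sum1 nondeg.
have pcharC : [pchar Kbar] =i pred0 by move=> p; rewrite (fmorph_pchar iota) pchar0.
have [N N_gt0 alphaN] := Gamma_common_exponent Gamma_alpha.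
have [zeta zeta_prim] := closed_pchar0_prim_root pcharC N_gt0.
have alpha_neq0 i : alpha i != 0 by case: (Gamma_alpha i).
have twist := nondegenerate_sum_twist_closure pchar0 algK rouK zeta_prim alpha_neq0 alphaN
  sum1 nondeg.
suff xi_i i : exists xi, xi != 0 /\ is_root_of_unity xi /\
    exists y : K, alpha i ^+ lam * xi = iota y by exact: fin_all_exists xi_i.
have [m [y Dy]] := twist i; have zetaN := prim_expr_order zeta_prim.
exists (zeta ^+ m); split; last split.
- by rewrite expf_neq0 // (unity_root_neq0 N_gt0 zetaN).
- by exists N; split => //; rewrite exprAC zetaN expr1n.
- by exists y.
Qed.
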